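(* Let $i:B\to A$ be a $k$-linear $X$-functor from a diagonal $k$-linear category $B$ to a $k$-linear category $A$, and assume that $A_{xy}$ is a finitely generated projective left $B_x$-module for all $x,y\in X$. Let $\mathcal{A}={}_B{\rm End}(A)$. For a descent datum $(M,\sigma)$, define a right $\mathcal{A}$-action on $M$ by $mf=m_{<0>}f(m_{<1>})\in M_{xz}$ for $m\in M_{xy}$, $f\in\mathcal{A}^x_{yz}$. This defines a functor $\underline{\rm Desc}_B(A)\to\mathcal{M}_\mathcal{A}$, $(M,\sigma)\mapsto M$, acting as the identity on morphisms, and this functor is an isomorphism of categories.
   Context: Let $k$ be a commutative ring; unadorned $\otimes$ is over $k$. A $k$-linear category $A$ with class of objects $X$ consists of $k$-modules $A_{xy}$, associative compositions $A_{xy}\otimes A_{yz}\to A_{xz}$, $a\otimes b\mapsto ab$, and units $1_x\in A_{xx}$. A right $A$-module is a family $(M_{xy})_{x,y\in X}$ with maps $M_{xy}\otimes A_{yz}\to M_{xz}$, associative and unital. A diagonal $k$-linear category $B$ is a family of $k$-algebras $(B_x)_{x\in X}$. A $k$-linear $X$-functor $i:B\to A$ amounts to $k$-algebra morphisms $i_x:B_x\to A_{xx}$, making $A_{xy}$ a $B_x$-$B_y$-bimodule and $M_{xy}$ a right $B_y$-module. A descent datum $(M,\sigma)$ is a right $A$-module $M$ with $k$-linear maps $\sigma_{xy}:M_{xy}\to M_{xx}\otimes_{B_x}A_{xy}$, $\sigma_{xy}(m)=m_{<0>}\otimes_{B_x}m_{<1>}$, such that for all $m\in M_{xy}$, $a\in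 A_{yz}$: (i) $\sigma_{xz}(ma)=m_{<0>}\otimes_{B_x}m_{<1>}a$; (ii) $\sigma_{xx}(m_{<0>})\otimes_{B_x}m_{<1>}=m_{<0>}\otimes_{B_x}1_x\otimes_{B_x}m_{<1>}$; (iii) $m_{<0>}m_{<1>}=m$. Morphisms of descent data are right $A$-module morphisms $f$ with $f_{xx}(m_{<0>})\otimes_{B_x}m_{<1>}=\sigma'_{xy}(f_{xy}(m))$; the category is $\underline{\rm Desc}_B(A)$. A $k$-linear cluster $\mathcal{A}$ with objects $X$ is a family $(\mathcal{A}^x)_{x\in X}$ of $k$-linear categories with object class $X$; $\mathcal{A}^x_{yz}$ has unit $1^x_y\in\mathcal{A}^x_{yy}$. A right $\mathcal{A}$-module is a family $(M_{xy})$ of $k$-modules with maps $M_{xy}\otimes\mathcal{A}^x_{yz}\to M_{xz}$, $m\otimes f\mapsto mf$, with $m(fg)=(mf)g$ and $m1^x_y=m$; morphisms are families $\varphi_{xy}$ with $\varphi_{xz}(mf)=\varphi_{xy}(m)f$; the category is $\mathcal{M}_\mathcal{A}$. The left endocluster $\mathcal{A}={}_B{\rm End}(A)$ is given by $\mathcal{A}^x_{yz}={}_{B_x}{\rm Hom}(A_{xy},A_{xz})$ with multiplication $fg=g\circ f$ and unit $1^x_y={\rm id}_{A_{xy}}$. *)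

From HB Require Import structures.
From mathcomp Require Import all_boot all_order all_algebra.
Set Implicit Arguments.
Unset Strict Implicit.
Unset Printing Implicit Defensive.
Import GRing.Theory.
Local Open Scope ring_scope.

(* Tensor products over a ring R of a right R-module P and a left R-module Q *)
(* (resp. of P, an R-bimodule Q and a left module S).  An element of the     *)
(* tensor product is represented by a finite list of elementary tensors      *)
(* (p ⊗ q); two such lists denote the same element of P ⊗_R Q iff they have  *)
(* the same image under every R-balanced biadditive map into every abelian  *)
(* group (universal property of the tensor product).                        *)

Definition balanced (P Q G : zmodType) (R : Type)
  (rP : P -> R -> P) (lQ : R -> Q -> Q) (beta : P -> Q -> G) : Prop :=
  [/\ (forall p p' q, beta (p + p') q = beta p q + beta p' q),
      (forall p q q', beta p (q + q') = beta p q + beta p q') &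
      (forall p r q, beta (rP p r) q = beta p (lQ r q))].

Definition tens_eq (P Q : zmodType) (R : Type)
  (rP : P -> R -> P) (lQ : R -> Q -> Q) (l1 l2 : seq (P * Q)) : Prop :=
  forall (G : zmodType) (beta : P -> Q -> G), balanced rP lQ beta ->
    \sum_(u <- l1) beta u.1 u.2 = \sum_(u <- l2) beta u.1 u.2.

Definition balanced3 (P Q S G : zmodType) (R : Type)
  (rP : P -> R -> P) (lQ : R -> Q -> Q) (rQ : Q -> R -> Q) (lS : R -> S -> S)
  (beta : P -> Q -> S -> G) : Prop :=
  [/\ (forall p p' q s, beta (p + p') q s = beta p q s + beta p' q s),
      (forall p q q' s, beta p (q + q') s = beta p q s + beta p q' s),
      (forall p q s s', beta p q (s + s') = beta p q s + beta p q s'),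
      (forall p r q s, beta (rP p r) q s = beta p (lQ r q) s) &
      (forall p q r s, beta p (rQ q r) s = beta p q (lS r s))].

Definition tens3_eq (P Q S : zmodType) (R : Type)
  (rP : P -> R -> P) (lQ : R -> Q -> Q) (rQ : Q -> R -> Q) (lS : R -> S -> S)
  (l1 l2 : seq (P * Q * S)) : Prop :=
  forall (G : zmodType) (beta : P -> Q -> S -> G),
    balanced3 rP lQ rQ lS beta ->
    \sum_(u <- l1) beta u.1.1 u.1.2 u.2 = \sum_(u <- l2) beta u.1.1 u.1.2 u.2.

Section Cat.
Variables (k : comPzRingType) (X : Type) (hom : X -> X -> lmodType k).
Variable comp : forall x y z, hom x y -> hom y z -> hom x z.
Variable id1 : forall x, hom x x.

Definition klincat : Prop :=
  [/\ (forall x y z (c : k) (a a' : hom x y) (b : hom y z),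
         comp (c *: a + a') b = c *: comp a b + comp a' b),
      (forall x y z (c : k) (a : hom x y) (b b' : hom y z),
         comp a (c *: b + b') = c *: comp a b + comp a b'),
      (forall x y z w (a : hom x y) (b : hom y z) (e : hom z w),
         comp (comp a b) e = comp a (comp b e)),
      (forall x y (a : hom x y), comp (id1 x) a = a) &
      (forall x y (a : hom x y), comp a (id1 y) = a)].

(* A diagonal k-linear category: a family of k-algebras (B x), each given as *)
(* a ring together with its structure map eta x : k -> B x, a ring morphism  *)
(* with central image.                                                       *)
Definition kalg (B : X -> pzRingType) (eta : forall x, k -> B x) : Prop :=
  forall x,
  [/\ (forall c d, eta x (c + d) = eta x c + eta x d),
      (forall c d, eta x (c * d) = eta x c * eta x d),
      eta x 1 = 1 &
      (forall c b, eta x c * b = b * eta x c)].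

(* A k-linear X-functor i : B -> A, i.e. k-algebra maps i x : B x -> A_xx.  *)
Definition kfunctor (B : X -> pzRingType) (eta : forall x, k -> B x)
  (i : forall x, B x -> hom x x) : Prop :=
  forall x,
  [/\ (forall b b', i x (b + b') = i x b + i x b'),
      (forall b b', i x (b * b') = comp (i x b) (i x b')),
      i x 1 = id1 x &
      (forall c, i x (eta x c) = c *: id1 x)].

(* A_xy is a finitely generated projective left B_x-module: a direct summand *)
(* of a finite free left module B_x^n.                                       *)
Definition fgproj_left (B : X -> pzRingType) (i : forall x, B x -> hom x x)
  (x y : X) : Prop :=
  exists (n : nat) (p : hom x y -> 'I_n -> B x) (s : ('I_n -> B x) -> hom x y),
  [/\ (forall a a' j, p (a + a') j = p a j + p a' j),
      (forall b a j, p (comp (i x b) a) j = b * p a j),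
      (forall v w, s (fun j => v j + w j) = s v + s w),
      (forall b v, s (fun j => b * v j) = comp (i x b) (s v)) &
      (forall a, s (p a) = a)].

Definition rmodA (M : X -> X -> lmodType k)
  (act : forall x y z, M x y -> hom y z -> M x z) : Prop :=
  [/\ (forall x y z (c : k) (m m' : M x y) (a : hom y z),
         act _ _ _ (c *: m + m') a = c *: act _ _ _ m a + act _ _ _ m' a),
      (forall x y z (c : k) (m : M x y) (a a' : hom y z),
         act _ _ _ m (c *: a + a') = c *: act _ _ _ m a + act _ _ _ m a'),
      (forall x y z w (m : M x y) (a : hom y z) (b : hom z w),
         act _ _ _ (act _ _ _ m a) b = act _ _ _ m (comp a b)) &
      (forall x y (m : M x y), act _ _ _ m (id1 y) = m)].

Definition rmodA_morph (M M' : X -> X -> lmodType k)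
  (act : forall x y z, M x y -> hom y z -> M x z)
  (act' : forall x y z, M' x y -> hom y z -> M' x z)
  (phi : forall x y, M x y -> M' x y) : Prop :=
  (forall x y (c : k) (m m' : M x y), phi x y (c *: m + m') = c *: phi x y m + phi x y m')
  /\ (forall x y z (m : M x y) (a : hom y z), phi x z (act _ _ _ m a) = act' _ _ _ (phi x y m) a).

Section Desc.
Variables (B : X -> pzRingType) (i : forall x, B x -> hom x x).

Definition rB (M : X -> X -> lmodType k)
  (act : forall x y z, M x y -> hom y z -> M x z) (x : X) :
  M x x -> B x -> M x x := fun m b => act _ _ _ m (i b).
Definition lB (x y : X) : B x -> hom x y -> hom x y := fun b a => comp (i b) a.
Definition rBA (x : X) : hom x x -> B x -> hom x x := fun a b => comp a (i b).

(* Descent data (M, sigma): sigma x y m is a representative (list of        *)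
(* elementary tensors m_<0> ⊗ m_<1>) of sigma_xy(m) in M_xx ⊗_{B_x} A_xy.    *)
Definition descent (M : X -> X -> lmodType k)
  (act : forall x y z, M x y -> hom y z -> M x z)
  (sig : forall x y, M x y -> seq (M x x * hom x y)) : Prop :=
  [/\ rmodA act,
      (forall x y (c : k) (m m' : M x y),
         tens_eq (rB act (x:=x)) (@lB x y) (sig x y (c *: m + m'))
           ([seq (c *: u.1, u.2) | u <- sig x y m] ++ sig x y m')),
      (forall x y z (m : M x y) (a : hom y z),
         tens_eq (rB act (x:=x)) (@lB x z) (sig x z (act _ _ _ m a))
           [seq (u.1, comp u.2 a) | u <- sig x y m]),
      (forall x y (m : M x y),
         tens3_eq (rB act (x:=x)) (@lB x x) (@rBA x) (@lB x y)
           (flatten [seq [seq (v.1, v.2, u.2) | v <- sig x x u.1] | u <- sig x y m])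
           [seq (u.1, id1 x, u.2) | u <- sig x y m]) &
      (forall x y (m : M x y), \sum_(u <- sig x y m) act _ _ _ u.1 u.2 = m)].

Definition desc_morph (M M' : X -> X -> lmodType k)
  (act : forall x y z, M x y -> hom y z -> M x z)
  (sig : forall x y, M x y -> seq (M x x * hom x y))
  (act' : forall x y z, M' x y -> hom y z -> M' x z)
  (sig' : forall x y, M' x y -> seq (M' x x * hom x y))
  (phi : forall x y, M x y -> M' x y) : Prop :=
  rmodA_morph act act' phi /\
  (forall x y (m : M x y),
     tens_eq (rB act' (x:=x)) (@lB x y)
       [seq (phi x x u.1, u.2) | u <- sig x y m] (sig' x y (phi x y m))).

(* The left endocluster _B End(A): A^x_yz = _{B_x}Hom(A_xy, A_xz). *)
Record blin (x y z : X) := Blin {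
  bfun :> hom x y -> hom x z;
  _ : forall a a', bfun (a + a') = bfun a + bfun a';
  _ : forall (b : B x) a, bfun (comp (i b) a) = comp (i b) (bfun a)
}.

(* Right modules over the cluster _B End(A), with product fg = g \o f and   *)
(* unit id.  (k-module structure on A^x_yz is pointwise.)                   *)
Definition rmodEnd (M : X -> X -> lmodType k)
  (actE : forall x y z, M x y -> blin x y z -> M x z) : Prop :=
  [/\ (forall x y z (c : k) (m m' : M x y) (f : blin x y z),
         actE _ _ _ (c *: m + m') f = c *: actE _ _ _ m f + actE _ _ _ m' f),
      (forall x y z (c : k) (m : M x y) (f g h : blin x y z),
         (forall a, h a = c *: f a + g a) ->
         actE _ _ _ m h = c *: actE _ _ _ m f + actE _ _ _ m g),
      (forall x y z w (m : M x y) (f : blin x y z) (g : blin x z w)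
              (h : blin x y w),
         (forall a, h a = g (f a)) -> actE _ _ _ m h = actE _ _ _ (actE _ _ _ m f) g) &
      (forall x y (m : M x y) (f : blin x y y),
         (forall a, f a = a) -> actE _ _ _ m f = m)].

Definition rmodEnd_morph (M M' : X -> X -> lmodType k)
  (actE : forall x y z, M x y -> blin x y z -> M x z)
  (actE' : forall x y z, M' x y -> blin x y z -> M' x z)
  (phi : forall x y, M x y -> M' x y) : Prop :=
  (forall x y (c : k) (m m' : M x y), phi x y (c *: m + m') = c *: phi x y m + phi x y m')
  /\ (forall x y z (m : M x y) (f : blin x y z),
        phi x z (actE _ _ _ m f) = actE' _ _ _ (phi x y m) f).

Definition induced (M : X -> X -> lmodType k)
  (act : forall x y z, M x y -> hom y z -> M x z)
  (sig : forall x y, M x y -> seq (M x x * hom x y)) :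
  forall x y z, M x y -> blin x y z -> M x z :=
  fun x y z m f => \sum_(u <- sig x y m) act _ _ _ u.1 (f u.2).

End Desc.
End Cat.

(* A_xy is finitely generated projective over B_x, so it has a finite dual
   basis (e_j, p_j) with a = sum_j i(p_j a) e_j.  Consequently an element of
   M_xx (x)_{B_x} A_xy is determined by its images under the balanced maps
   m (x) a |-> m i(p_j a), and these are the actions of the endocluster
   elements a |-> i(p_j a) of A^x_yx: a descent datum is determined by its
   induced action.  Conversely a right module M over the endocluster becomes a
   descent datum through m a := m (- a) and sigma(m) := sum_j m (i p_j) (x) e_j,
   whose induced action is the given one because f(b) = sum_j i(p_j b) f(e_j). *)

From mathcomp Require Import all_boot all_order all_algebra.
From Stdlib Require Import FunctionalExtensionality ClassicalEpsilon.
Set Implicit Arguments.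
Unset Strict Implicit.
Unset Printing Implicit Defensive.
Import GRing.Theory.
Local Open Scope ring_scope.

Lemma morph_add0 (G1 G2 : zmodType) (f : G1 -> G2) :
  {morph f : a b / a + b} -> f 0 = 0.
Proof. by move=> fD; apply: (addrI (f 0)); rewrite -fD !addr0. Qed.

Lemma morph_add_sum (G1 G2 : zmodType) (f : G1 -> G2) :
  {morph f : a b / a + b} -> forall (I : Type) (r : seq I) (F : I -> G1),
  f (\sum_(j <- r) F j) = \sum_(j <- r) f (F j).
Proof. by move=> fD I r F; apply: (big_morph f fD (morph_add0 fD)). Qed.

Lemma morph_add_of_scaleD (k : pzRingType) (M M' : lmodType k) (f : M -> M') :
  (forall c m m', f (c *: m + m') = c *: f m + f m') -> {morph f : a b / a + b}.
Proof. by move=> fZD m m'; have := fZD 1 m m'; rewrite !scale1r. Qed.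

Section EndoclusterDescent.
Variables (k : comPzRingType) (X : Type) (hom : X -> X -> lmodType k).
Variable comp : forall x y z, hom x y -> hom y z -> hom x z.
Variable id1 : forall x, hom x x.
Variables (B : X -> pzRingType) (eta : forall x, k -> B x).
Variable i : forall x, B x -> hom x x.
Hypothesis Hcat : klincat comp id1.
Hypothesis Hfun : kfunctor comp id1 eta i.

Lemma compZDr x y z (c : k) (a : hom x y) (b b' : hom y z) :
  comp a (c *: b + b') = c *: comp a b + comp a b'.
Proof. by case: Hcat. Qed.

Lemma compDl x y z (a a' : hom x y) (b : hom y z) :
  comp (a + a') b = comp a b + comp a' b.
Proof.
by case: Hcat => compZDl _ _ _ _; have := compZDl _ _ _ 1 a a' b; rewrite !scale1r.
Qed.

Lemma compDr x y z (a : hom x y) (b b' : hom y z) :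
  comp a (b + b') = comp a b + comp a b'.
Proof. by have := compZDr 1 a b b'; rewrite !scale1r. Qed.

Lemma compA x y z w (a : hom x y) (b : hom y z) (e : hom z w) :
  comp (comp a b) e = comp a (comp b e).
Proof. by case: Hcat. Qed.

Lemma comp1l x y (a : hom x y) : comp (id1 x) a = a.
Proof. by case: Hcat. Qed.

Lemma comp1r x y (a : hom x y) : comp a (id1 y) = a.
Proof. by case: Hcat. Qed.

Lemma comp_suml x y z (I : Type) (r : seq I) (F : I -> hom x y) (b : hom y z) :
  comp (\sum_(j <- r) F j) b = \sum_(j <- r) comp (F j) b.
Proof. exact: (morph_add_sum (fun a a' => compDl a a' b)). Qed.

Lemma comp_sumr x y z (I : Type) (r : seq I) (F : I -> hom y z) (a : hom x y) :
  comp a (\sum_(j <- r) F j) = \sum_(j <- r) comp a (F j).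
Proof. exact: (morph_add_sum (compDr a)). Qed.

Lemma iD x (b b' : B x) : i (b + b') = i b + i b'.
Proof. by case: (Hfun x). Qed.

Lemma iM x (b b' : B x) : i (b * b') = comp (i b) (i b').
Proof. by case: (Hfun x). Qed.

Lemma i_sum x (I : Type) (r : seq I) (F : I -> B x) :
  i (\sum_(j <- r) F j) = \sum_(j <- r) i (F j).
Proof. exact: (morph_add_sum (@iD x)). Qed.

Lemma blinD x y z (f : blin comp i x y z) a a' : f (a + a') = f a + f a'.
Proof. by case: f. Qed.

Lemma blinL x y z (f : blin comp i x y z) (b : B x) a :
  f (comp (i b) a) = comp (i b) (f a).
Proof. by case: f. Qed.

Lemma blin_sum x y z (f : blin comp i x y z) (I : Type) (r : seq I) F :
  f (\sum_(j <- r) F j) = \sum_(j <- r) f (F j).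
Proof. exact: (morph_add_sum (@blinD x y z f)). Qed.

Definition blin_rcomp x y z (a : hom y z) : blin comp i x y z.
Proof.
refine (@Blin _ _ _ comp _ i x y z (fun b => comp b a) _ _).
- by move=> b b'; rewrite compDl.
- by move=> b c; rewrite compA.
Defined.
Arguments blin_rcomp {x y z} a.

Definition blin_comp x y z w (f : blin comp i x y z) (g : blin comp i x z w) :
  blin comp i x y w.
Proof.
refine (@Blin _ _ _ comp _ i x y w (g \o f) _ _).
- by move=> a a' /=; rewrite !blinD.
- by move=> b a /=; rewrite !blinL.
Defined.

Definition blin_id x y : blin comp i x y y.
Proof.
exact: (@Blin _ _ _ comp _ i x y y id (fun _ _ => erefl) (fun _ _ => erefl)).
Defined.
Arguments blin_id {x y}.

Definition blin_big x y z (I : Type) (r : seq I) (F : I -> blin comp i x y z) :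
  blin comp i x y z.
Proof.
refine (@Blin _ _ _ comp _ i x y z (fun a => \sum_(l <- r) F l a) _ _).
- by move=> a a'; rewrite -big_split; apply: eq_bigr => l _; rewrite blinD.
- by move=> b a; rewrite comp_sumr; apply: eq_bigr => l _; rewrite blinL.
Defined.

Record dual_basis (x y : X) := DualBasis {
  db_size : nat;
  db_coord : hom x y -> 'I_db_size -> B x;
  db_vec : 'I_db_size -> hom x y;
  db_coordD : forall a a' j, db_coord (a + a') j = db_coord a j + db_coord a' j;
  db_coordL : forall b a j, db_coord (comp (i b) a) j = b * db_coord a j;
  db_expand : forall a, a = \sum_(j < db_size) comp (i (db_coord a j)) (db_vec j)
}.
Arguments db_coord {x y} d a j.
Arguments db_vec {x y} d j.
Arguments db_coordD {x y} d a a' j.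
Arguments db_coordL {x y} d b a j.
Arguments db_expand {x y} d a.

Lemma db_coord_sum x y (d : dual_basis x y) (I : Type) (r : seq I) (F : I -> hom x y) j :
  db_coord d (\sum_(l <- r) F l) j = \sum_(l <- r) db_coord d (F l) j.
Proof. exact: (morph_add_sum (fun a a' => db_coordD d a a' j)). Qed.

Lemma lin_free_expand x y n (s : ('I_n -> B x) -> hom x y) :
  (forall v w, s (fun j => v j + w j) = s v + s w) ->
  (forall b v, s (fun j => b * v j) = comp (i b) (s v)) ->
  forall v, s v = \sum_(j < n) comp (i (v j)) (s (fun j' => (j' == j)%:R)).
Proof.
move=> sD sL v.
have s0 : s (fun _ => 0) = 0.
  by apply: (addrI (s (fun _ => 0))); rewrite -sD !addr0.
have s_sum (F : 'I_n -> 'I_n -> B x) (r : seq 'I_n) :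
    s (fun j' => \sum_(l <- r) F l j') = \sum_(l <- r) s (F l).
  elim: r => [|l r IH].
    rewrite big_nil -s0; congr (s _).
    by apply: functional_extensionality => j; rewrite big_nil.
  rewrite big_cons -IH -sD; congr (s _).
  by apply: functional_extensionality => j; rewrite big_cons.
have v_expand : v = fun j' => \sum_(j < n) v j * (j' == j)%:R.
  apply: functional_extensionality => j'.
  rewrite (bigD1 j') //= eqxx mulr1 big1 ?addr0 // => j.
  by rewrite eq_sym => /negbTE ->; rewrite mulr0.
by rewrite {1}v_expand s_sum; apply: eq_bigr => j _; rewrite sL.
Qed.

Lemma dual_basis_of_fgproj x y : fgproj_left comp i x y -> inhabited (dual_basis x y).
Proof.
case=> n [p [s [pD pL sD sL sp]]]; constructor.
by apply: (DualBasis pD pL) => a; rewrite -{1}(sp a) (lin_free_expand sD sL).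
Qed.

Definition blin_coord x y (d : dual_basis x y) (j : 'I_(db_size d)) : blin comp i x y x.
Proof.
refine (@Blin _ _ _ comp _ i x y x (fun a => i (db_coord d a j)) _ _).
- by move=> a a'; rewrite db_coordD iD.
- by move=> b a; rewrite db_coordL iM.
Defined.
Arguments blin_coord {x y} d j.

Section BalancedMaps.
Variables (x y : X) (d : dual_basis x y) (P : zmodType) (rb : P -> B x -> P).

Lemma balanced_dual_basis (G : zmodType) (beta : P -> hom x y -> G) p a :
  balanced rb (lB comp i (x:=x) (y:=y)) beta ->
  beta p a = \sum_(j < db_size d) beta (rb p (db_coord d a j)) (db_vec d j).
Proof.
case=> _ betaDr betaB; rewrite {1}(db_expand d a) (morph_add_sum (betaDr p)).
by apply: eq_bigr => j _; rewrite betaB.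
Qed.

Lemma balanced_sum_dual_basis (G : zmodType) (beta : P -> hom x y -> G)
    (l : seq (P * hom x y)) :
  balanced rb (lB comp i (x:=x) (y:=y)) beta ->
  \sum_(u <- l) beta u.1 u.2 =
  \sum_(j < db_size d) beta (\sum_(u <- l) rb u.1 (db_coord d u.2 j)) (db_vec d j).
Proof.
move=> beta_bal; have [betaDl _ _] := beta_bal.
rewrite (eq_bigr _ (fun u _ => balanced_dual_basis u.1 u.2 beta_bal)) exchange_big /=.
by apply: eq_bigr => j _; rewrite (morph_add_sum (fun p p' => betaDl p p' (db_vec d j))).
Qed.

Lemma tens_eq_dual_basis (l1 l2 : seq (P * hom x y)) :
  (forall j, \sum_(u <- l1) rb u.1 (db_coord d u.2 j) =
             \sum_(u <- l2) rb u.1 (db_coord d u.2 j)) ->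
  tens_eq rb (lB comp i (x:=x) (y:=y)) l1 l2.
Proof.
move=> coord_eq G beta beta_bal.
rewrite !(balanced_sum_dual_basis _ beta_bal).
by apply: eq_bigr => j _; rewrite coord_eq.
Qed.

End BalancedMaps.

Section RightModule.
Variables (M : X -> X -> lmodType k) (act : forall x y z, M x y -> hom y z -> M x z).
Hypothesis Hr : rmodA comp id1 act.

Lemma actZDl x y z c (m m' : M x y) (a : hom y z) :
  act (c *: m + m') a = c *: act m a + act m' a.
Proof. by case: Hr. Qed.

Lemma actDl x y z (m m' : M x y) (a : hom y z) : act (m + m') a = act m a + act m' a.
Proof. by have := actZDl 1 m m' a; rewrite !scale1r. Qed.

Lemma actZl x y z c (m : M x y) (a : hom y z) : act (c *: m) a = c *: act m a.
Proof.
have act0 := morph_add0 (fun m m' : M x y => actDl m m' a).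
by have := actZDl c m 0 a; rewrite !addr0 act0 addr0.
Qed.

Lemma actZDr x y z c (m : M x y) (a a' : hom y z) :
  act m (c *: a + a') = c *: act m a + act m a'.
Proof. by case: Hr. Qed.

Lemma actDr x y z (m : M x y) (a a' : hom y z) : act m (a + a') = act m a + act m a'.
Proof. by have := actZDr 1 m a a'; rewrite !scale1r. Qed.

Lemma actA x y z w (m : M x y) (a : hom y z) (b : hom z w) :
  act (act m a) b = act m (comp a b).
Proof. by case: Hr. Qed.

Lemma act_suml x y z (I : Type) (r : seq I) (F : I -> M x y) (a : hom y z) :
  act (\sum_(j <- r) F j) a = \sum_(j <- r) act (F j) a.
Proof. exact: (morph_add_sum (fun m m' => actDl m m' a)). Qed.

Lemma balanced_act_blin x y z (f : blin comp i x y z) :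
  balanced (rB i act (x:=x)) (lB comp i (x:=x) (y:=y)) (fun p a => act p (f a)).
Proof.
split=> [p p' a|p a a'|p b a]; first by rewrite actDl.
- by rewrite blinD actDr.
- by rewrite /rB /lB actA blinL.
Qed.

Lemma balanced3_act_blin_comp x y z w (f : blin comp i x y z) (g : blin comp i x z w) :
  balanced3 (rB i act (x:=x)) (lB comp i (x:=x) (y:=x)) (rBA comp i (x:=x))
    (lB comp i (x:=x) (y:=y)) (fun p a b => act p (g (comp a (f b)))).
Proof.
split=> [p p' a b|p a a' b|p a b b'|p c a b|p a c b]; first by rewrite actDl.
- by rewrite compDl blinD actDr.
- by rewrite blinD compDr blinD actDr.
- by rewrite /rB /lB actA compA blinL.
- by rewrite /rBA /lB compA blinL.
Qed.

End RightModule.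

Section DescentDatum.
Variables (M : X -> X -> lmodType k) (act : forall x y z, M x y -> hom y z -> M x z).
Variable sig : forall x y, M x y -> seq (M x x * hom x y).
Hypothesis Hd : descent comp id1 i act sig.

Let Hr : rmodA comp id1 act. Proof. by case: Hd. Qed.

Lemma sig_sumD x y (m m' : M x y) (G : zmodType) (beta : M x x -> hom x y -> G) :
  balanced (rB i act (x:=x)) (lB comp i (x:=x) (y:=y)) beta ->
  \sum_(u <- sig (m + m')) beta u.1 u.2 =
  \sum_(u <- sig m) beta u.1 u.2 + \sum_(u <- sig m') beta u.1 u.2.
Proof.
case: Hd => _ sigZD _ _ _ beta_bal.
have := sigZD x y 1 m m' G beta beta_bal; rewrite scale1r => ->.
by rewrite big_cat big_map; under eq_bigr do rewrite scale1r.
Qed.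

Lemma sig_sum x y (I : Type) (r : seq I) (F : I -> M x y) (G : zmodType)
    (beta : M x x -> hom x y -> G) :
  balanced (rB i act (x:=x)) (lB comp i (x:=x) (y:=y)) beta ->
  \sum_(u <- sig (\sum_(j <- r) F j)) beta u.1 u.2 =
  \sum_(j <- r) \sum_(u <- sig (F j)) beta u.1 u.2.
Proof.
move=> beta_bal.
exact: (morph_add_sum (f := fun m => \sum_(u <- sig m) beta u.1 u.2)
         (fun m m' => sig_sumD m m' beta_bal)).
Qed.

Lemma induced_blin_rcomp x y z (m : M x y) (a : hom y z) :
  induced act sig m (blin_rcomp a) = act m a.
Proof.
case: Hd => _ _ _ _ sig_counit; rewrite /induced /= -{2}(sig_counit x y m).
by rewrite (act_suml Hr); apply: eq_bigr => u _; rewrite (actA Hr).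
Qed.

Lemma induced_comp x y z w (m : M x y) (f : blin comp i x y z) (g : blin comp i x z w)
    (h : blin comp i x y w) :
  (forall a, h a = g (f a)) ->
  induced act sig m h = induced act sig (induced act sig m f) g.
Proof.
case: Hd => _ _ sig_act sig_coassoc _ hE.
(* Condition (i) unfolds each inner coaction, coassociativity (ii) collapses the double sum. *)
rewrite /induced (sig_sum _ _ (balanced_act_blin Hr g)).
under [RHS]eq_bigr => u _ do
  rewrite (sig_act _ _ _ u.1 (f u.2) _ _ (balanced_act_blin Hr g)) big_map.
have := sig_coassoc x y m _ _ (balanced3_act_blin_comp Hr f g).
rewrite big_flatten big_map /= big_map /=.
under eq_bigr do rewrite big_map /=.
by move=> ->; apply: eq_bigr => u _; rewrite comp1l hE.
Qed.

Lemma induced_rmodEnd : @rmodEnd k X hom comp B i M (induced act sig).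
Proof.
case: Hd => _ sigZD _ _ sig_counit; split.
- move=> x y z c m m' f; rewrite /induced (sigZD x y c m m' _ _ (balanced_act_blin Hr f)).
  rewrite big_cat big_map scaler_sumr; congr (_ + _).
  by apply: eq_bigr => u _; rewrite (actZl Hr).
- move=> x y z c m f g h hE; rewrite /induced scaler_sumr -big_split.
  by apply: eq_bigr => u _; rewrite hE (actZDr Hr).
- exact: induced_comp.
- move=> x y m f fE; rewrite /induced -{2}(sig_counit x y m).
  by apply: eq_bigr => u _; rewrite fE.
Qed.

End DescentDatum.

Section InducedMorphism.
Variables (M M' : X -> X -> lmodType k).
Variables (act : forall x y z, M x y -> hom y z -> M x z)
  (act' : forall x y z, M' x y -> hom y z -> M' x z).
Variables (sig : forall x y, M x y -> seq (M x x * hom x y))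
  (sig' : forall x y, M' x y -> seq (M' x x * hom x y)).
Hypotheses (Hd : descent comp id1 i act sig) (Hd' : descent comp id1 i act' sig').
Variable phi : forall x y, M x y -> M' x y.

Lemma induced_morph_of_desc_morph :
  desc_morph comp i act sig act' sig' phi ->
  @rmodEnd_morph k X hom comp B i M M' (induced act sig) (induced act' sig') phi.
Proof.
case=> [[phiZD phi_act] phi_sig]; split=> // x y z m f.
have [Hr' _ _ _ _] := Hd'.
rewrite /induced (morph_add_sum (morph_add_of_scaleD (phiZD x z))).
rewrite -(phi_sig x y m _ _ (balanced_act_blin Hr' f)) big_map.
by apply: eq_bigr => u _; rewrite phi_act.
Qed.

Lemma desc_morph_of_induced_morph :
  (forall x y, fgproj_left comp i x y) ->
  @rmodEnd_morph k X hom comp B i M M' (induced act sig) (induced act' sig') phi ->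
  desc_morph comp i act sig act' sig' phi.
Proof.
move=> Hp [phiZD phi_ind].
have phi_act x y z (m : M x y) (a : hom y z) : phi (act m a) = act' (phi m) a.
  by rewrite -(induced_blin_rcomp Hd) phi_ind (induced_blin_rcomp Hd').
split; first by split.
move=> x y m; have [d] := dual_basis_of_fgproj (Hp x y).
apply: (tens_eq_dual_basis (d := d)) => j; rewrite big_map.
transitivity (induced act' sig' (phi m) (blin_coord d j)) => //.
rewrite -phi_ind /induced (morph_add_sum (morph_add_of_scaleD (phiZD x x))).
by apply: eq_bigr => u _; rewrite phi_act.
Qed.

End InducedMorphism.

Section InducedInjective.
Variables (M : X -> X -> lmodType k) (act1 act2 : forall x y z, M x y -> hom y z -> M x z).
Variables (sig1 sig2 : forall x y, M x y -> seq (M x x * hom x y)).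
Hypotheses (Hd1 : descent comp id1 i act1 sig1) (Hd2 : descent comp id1 i act2 sig2).
Hypothesis induced_eq : forall x y z (m : M x y) (f : blin comp i x y z),
  induced act1 sig1 m f = induced act2 sig2 m f.

Lemma act_eq_of_induced_eq x y z (m : M x y) (a : hom y z) : act1 m a = act2 m a.
Proof. by rewrite -(induced_blin_rcomp Hd1) induced_eq (induced_blin_rcomp Hd2). Qed.

Lemma sig_eq_of_induced_eq x y (m : M x y) :
  fgproj_left comp i x y ->
  tens_eq (rB i act1 (x:=x)) (lB comp i (x:=x) (y:=y)) (sig1 m) (sig2 m).
Proof.
case/dual_basis_of_fgproj=> d; apply: (tens_eq_dual_basis (d := d)) => j.
transitivity (induced act1 sig1 m (blin_coord d j)) => //.
by rewrite induced_eq /induced; apply: eq_bigr => u _; rewrite /rB act_eq_of_induced_eq.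
Qed.

End InducedInjective.

(* One dual basis for every pair of objects at once, hence a choice. *)
Definition fgproj_dual_basis (Hp : forall x y, fgproj_left comp i x y) x y :
  dual_basis x y :=
  epsilon (dual_basis_of_fgproj (Hp x y)) (fun _ => True).

Section EndoclusterModule.
Variables (M : X -> X -> lmodType k).
Variable actE : forall x y z, M x y -> blin comp i x y z -> M x z.
Hypothesis HE : @rmodEnd k X hom comp B i M actE.

Lemma actE_ZDl x y z c (m m' : M x y) (f : blin comp i x y z) :
  actE (c *: m + m') f = c *: actE m f + actE m' f.
Proof. by case: HE. Qed.

Lemma actE_ZDr x y z c (m : M x y) (f g h : blin comp i x y z) :
  (forall a, h a = c *: f a + g a) -> actE m h = c *: actE m f + actE m g.
Proof. by case: HE => _ actE_ZDr _ _; apply: actE_ZDr. Qed.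

Lemma actE_id x y (m : M x y) (f : blin comp i x y y) : (forall a, f a = a) -> actE m f = m.
Proof. by case: HE => _ _ _ actE_id; apply: actE_id. Qed.

Lemma actE_blin_comp x y z w (m : M x y) (f : blin comp i x y z) (g : blin comp i x z w) :
  actE (actE m f) g = actE m (blin_comp f g).
Proof. by case: HE => _ _ actE_comp _; rewrite (actE_comp _ _ _ _ m f g). Qed.

Lemma actE_ext x y z (m : M x y) (f g : blin comp i x y z) :
  (forall a, f a = g a) -> actE m f = actE m g.
Proof.
case: HE => _ _ actE_comp actE_id fg.
by rewrite (actE_comp _ _ _ _ m g blin_id f) // actE_id.
Qed.

Lemma actE_sum x y z (m : M x y) (I : Type) (r : seq I) (F : I -> blin comp i x y z)
    (h : blin comp i x y z) :
  (forall a, h a = \sum_(l <- r) F l a) -> actE m h = \sum_(l <- r) actE m (F l).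
Proof.
elim: r h => [|l r IH] h hE.
  rewrite big_nil; apply: (addrI (actE m h)); rewrite addr0 -[X in X + _]scale1r.
  by symmetry; apply: actE_ZDr => a; rewrite hE big_nil scale1r addr0.
rewrite big_cons -(IH (blin_big r F)) // -[actE m (F l)]scale1r.
by apply: actE_ZDr => a; rewrite scale1r hE big_cons.
Qed.

Definition hom_act x y z (m : M x y) (a : hom y z) : M x z := actE m (blin_rcomp a).

Lemma hom_act_rmodA : rmodA comp id1 hom_act.
Proof.
split=> [x y z c m m' a|x y z c m a a'|x y z w m a b|x y m]; rewrite /hom_act.
- exact: actE_ZDl.
- by apply: actE_ZDr => b /=; rewrite compZDr.
- by rewrite actE_blin_comp; apply: actE_ext => c /=; rewrite compA.
- by apply: actE_id => b /=; rewrite comp1r.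
Qed.

Lemma actE_coord_hom_act x y z (d : dual_basis x y) (d' : dual_basis x z) (m : M x y)
    (a : hom y z) l :
  actE (hom_act m a) (blin_coord d' l) =
  \sum_(j < db_size d)
    hom_act (actE m (blin_coord d j)) (i (db_coord d' (comp (db_vec d j) a) l)).
Proof.
rewrite /hom_act actE_blin_comp; under eq_bigr do rewrite actE_blin_comp.
apply: actE_sum => b /=.
rewrite {1}(db_expand d b) comp_suml db_coord_sum i_sum; apply: eq_bigr => j _.
by rewrite compA db_coordL iM.
Qed.

Lemma actE_coord_coord x y (d : dual_basis x y) (dx : dual_basis x x) (m : M x y) j l :
  actE (actE m (blin_coord d j)) (blin_coord dx l) =
  hom_act (actE m (blin_coord d j)) (i (db_coord dx (id1 x) l)).
Proof.
rewrite /hom_act !actE_blin_comp; apply: actE_ext => b /=.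
by rewrite -{1}[i (db_coord d b j)]comp1r db_coordL iM.
Qed.

Hypothesis Hp : forall x y, fgproj_left comp i x y.
Local Notation db x y := (fgproj_dual_basis Hp x y).

Definition coord_coaction x y (m : M x y) : seq (M x x * hom x y) :=
  [seq (actE m (blin_coord (db x y) j), db_vec (db x y) j)
  | j <- index_enum 'I_(db_size (db x y))].

Lemma coord_coaction_descent : descent comp id1 i hom_act coord_coaction.
Proof.
split=> [|x y c m m'|x y z m a|x y m|x y m]; first exact: hom_act_rmodA.
- move=> G beta [betaDl _ _]; rewrite /coord_coaction big_cat !big_map /= -big_split.
  by apply: eq_bigr => j _; rewrite actE_ZDl betaDl.
- move=> G beta beta_bal; rewrite [RHS](balanced_sum_dual_basis (db x z) _ beta_bal).
  rewrite /coord_coaction !big_map; apply: eq_bigr => l _; congr (beta _ _).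
  by rewrite !big_map (actE_coord_hom_act (db x y)).
- move=> G beta beta_bal; have [betaD1 betaD2 _ betaB1 _] := beta_bal.
  rewrite big_flatten /= /coord_coaction !big_map; apply: eq_bigr => j _.
  have beta_j_bal : balanced (rB i hom_act (x:=x)) (lB comp i (x:=x) (y:=x))
      (fun p a => beta p a (db_vec (db x y) j)).
    by split=> *; rewrite ?betaD1 ?betaD2 ?betaB1.
  rewrite (balanced_dual_basis (db x x) _ _ beta_j_bal) !big_map /=.
  by apply: eq_bigr => l _; rewrite /rB actE_coord_coord.
- rewrite /coord_coaction big_map /hom_act; under eq_bigr do rewrite actE_blin_comp.
  rewrite -[RHS](actE_id m (f := blin_id)) //.
  by symmetry; apply: actE_sum => b; apply: db_expand.
Qed.

Lemma induced_coord_coaction x y z (m : M x y) (f : blin comp i x y z) :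
  induced hom_act coord_coaction m f = actE m f.
Proof.
rewrite /induced /coord_coaction big_map /hom_act.
under eq_bigr do rewrite actE_blin_comp.
symmetry; apply: actE_sum => b /=.
by rewrite {1}(db_expand (db x y) b) blin_sum; apply: eq_bigr => j _; rewrite blinL.
Qed.

End EndoclusterModule.

End EndoclusterDescent.

Theorem theorem5p3 (k : comPzRingType) (X : Type)
  (hom : X -> X -> lmodType k)
  (comp : forall x y z, hom x y -> hom y z -> hom x z)
  (id1 : forall x, hom x x)
  (B : X -> pzRingType) (eta : forall x, k -> B x)
  (i : forall x, B x -> hom x x) :
  klincat comp id1 -> kalg eta -> kfunctor comp id1 eta i ->
  (forall x y, fgproj_left comp i x y) ->
  [/\
   (forall (M : X -> X -> lmodType k)
           (act : forall x y z, M x y -> hom y z -> M x z)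
           (sig : forall x y, M x y -> seq (M x x * hom x y)),
      descent comp id1 i act sig ->
      @rmodEnd k X hom comp B i M (@induced k X hom comp B i M act sig)),
   (forall (M M' : X -> X -> lmodType k)
           (act : forall x y z, M x y -> hom y z -> M x z)
           (sig : forall x y, M x y -> seq (M x x * hom x y))
           (act' : forall x y z, M' x y -> hom y z -> M' x z)
           (sig' : forall x y, M' x y -> seq (M' x x * hom x y))
           (phi : forall x y, M x y -> M' x y),
      descent comp id1 i act sig -> descent comp id1 i act' sig' ->
      (desc_morph comp i act sig act' sig' phi <->
       @rmodEnd_morph k X hom comp B i M M'
         (@induced k X hom comp B i M act sig)
         (@induced k X hom comp B i M' act' sig') phi)),
   (forall (M : X -> X -> lmodType k)
           (actE : forall x y z, M x y -> blin comp i x y z -> M x z),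
      @rmodEnd k X hom comp B i M actE ->
      exists (act : forall x y z, M x y -> hom y z -> M x z)
             (sig : forall x y, M x y -> seq (M x x * hom x y)),
        descent comp id1 i act sig /\
        (forall x y z (m : M x y) (f : blin comp i x y z),
           @induced k X hom comp B i M act sig x y z m f = actE x y z m f)) &
   (forall (M : X -> X -> lmodType k)
           (act1 act2 : forall x y z, M x y -> hom y z -> M x z)
           (sig1 sig2 : forall x y, M x y -> seq (M x x * hom x y)),
      descent comp id1 i act1 sig1 -> descent comp id1 i act2 sig2 ->
      (forall x y z (m : M x y) (f : blin comp i x y z),
         @induced k X hom comp B i M act1 sig1 x y z m f =
         @induced k X hom comp B i M act2 sig2 x y z m f) ->
      (forall x y z (m : M x y) (a : hom y z), act1 x y z m a = act2 x y z m a) /\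
      (forall x y (m : M x y),
         tens_eq (rB i act1 (x:=x)) (lB comp i (x:=x) (y:=y))
           (sig1 x y m) (sig2 x y m)))].
Proof.
move=> Hcat _ Hfun Hp; split.
- by move=> M act sig; apply: (induced_rmodEnd Hcat).
- move=> M M' act sig act' sig' phi Hd Hd'; split.
  + exact: (induced_morph_of_desc_morph Hd').
  + exact: (desc_morph_of_induced_morph Hcat Hfun Hd Hd' Hp).
- move=> M actE HE; exists (hom_act Hcat actE), (coord_coaction Hfun actE Hp); split.
  + exact: (coord_coaction_descent Hcat Hfun HE).
  + exact: (induced_coord_coaction Hcat Hfun HE).
- move=> M act1 act2 sig1 sig2 Hd1 Hd2 induced_eq; split.
  + exact: (act_eq_of_induced_eq Hcat Hd1 Hd2 induced_eq).
  + by move=> x y m; apply: (sig_eq_of_induced_eq Hcat Hfun Hd1 Hd2 induced_eq).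
Qed.
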